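(* The set of all extreme points $x$ of $B_J$ for which the set of $x$-norming partitions has cardinality greater than $\aleph_0$ is uncountable.
   Context: For a real sequence $x=(x(n))_{n\in\mathbb N}$ let $\|x\|_J=\sup\bigl(\sum_{i=1}^n|\sum_{k\in I_i}x(k)|^2\bigr)^{1/2}$ over all $n$ and all families of pairwise disjoint intervals $I_1,\dots,I_n$ of $\mathbb N$ (intervals: nonempty sets of consecutive positive integers, possibly infinite). $J=\{x:\|x\|_J<\infty\}$ with closed unit ball $B_J$; for $x\in J$ and any interval $I$ the series $\sum_{k\in I}x(k)$ converges. $\mathrm{supp}(x)=\{n:x(n)\ne0\}$. A family of intervals $\mathcal I=\{I_i\}_{i\in F}$: $F=\{1,\dots,k\}$ or $F=\mathbb N$, each $I_i$ an interval, $\max I_i<\min I_{i+1}$ whenever $i+1\in F$; $\|x\|_{\mathcal I}=(\sum_{i\in F}|\sum_{k\in I_i}x(k)|^2)^{1/2}$; it is $x$-norming if $\|x\|_{\mathcal I}=\|x\|_J$. For nonempty $L\subset\mathbb N$, $\sup L=\max L$ if finite and $\infty$ otherwise. An $x$-norming partition is an $x$-norming family with $\{\min I_i,\max I_i\}\subset\mathrm{supp}(x)$ for all $i<\sup F$, and, if $F$ is finite, $\min I_i\in\mathrm{supp}(x)$ and $\sup I_i=\sup\mathrm{supp}(x)$ for $i=\sup F$. *)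

From Stdlib Require Import Reals List Lia.
From Coquelicot Require Import Coquelicot.
Open Scope R_scope.

(* Real sequences indexed by the positive integers; we index by nat and
   treat index 0 as "1" (an order-isomorphic relabelling of N). *)
Definition rseq := nat -> R.

(* Encoded canonically by its minimum [lo] and its maximum [hi]
   ([hi = None] means the interval is infinite, i.e. [lo, oo)). *)
Record interval := mkInterval { lo : nat ; hi : option nat }.

Definition valid_interval (I : interval) : Prop :=
  match hi I with Some b => (lo I <= b)%nat | None => True end.

Definition in_interval (I : interval) (k : nat) : Prop :=
  (lo I <= k)%nat /\ match hi I with Some b => (k <= b)%nat | None => True end.

Definition isum (x : rseq) (I : interval) : R :=
  match hi I with
  | Some b => sum_n_m x (lo I) b
  | None => Series (fun n => x (lo I + n)%nat)
  end.

Definition pairwise_disjoint (l : list interval) : Prop :=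
  forall i j, (i < length l)%nat -> (j < length l)%nat -> i <> j ->
    forall k, ~ (in_interval (nth i l (mkInterval 0 None)) k /\
                 in_interval (nth j l (mkInterval 0 None)) k).

Definition sumsq (x : rseq) (l : list interval) : R :=
  fold_right Rplus 0 (map (fun I => (isum x I) ^ 2) l).

Definition Jnorm_sq (x : rseq) : Rbar :=
  Lub_Rbar (fun r => exists l : list interval,
              (forall I, In I l -> valid_interval I) /\ pairwise_disjoint l /\ r = sumsq x l).

Definition Rbar_sqrt (r : Rbar) : Rbar :=
  match r with Finite a => Finite (sqrt a) | p_infty => p_infty | m_infty => m_infty end.

Definition Jnorm (x : rseq) : Rbar := Rbar_sqrt (Jnorm_sq x).

Definition BJ (x : rseq) : Prop := Rbar_le (Jnorm x) 1.

Definition extreme_BJ (x : rseq) : Prop :=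
  BJ x /\ forall (y z : rseq) (t : R), BJ y -> BJ z -> 0 < t < 1 ->
    (forall n, x n = t * y n + (1 - t) * z n) -> y = z.

(* A family of intervals {I_i}_{i in F}: F = {1..k} (k >= 1), encoded as a
   nonempty finite list, or F = N, encoded as a stream of intervals. *)
Inductive family :=
  | FinFam (l : list interval)
  | InfFam (f : nat -> interval).

Definition fam_idx (F : family) (i : nat) : Prop :=
  match F with FinFam l => (i < length l)%nat | InfFam _ => True end.

Definition fam_get (F : family) (i : nat) : interval :=
  match F with FinFam l => nth i l (mkInterval 0 None) | InfFam f => f i end.

Definition is_family (F : family) : Prop :=
  (match F with FinFam l => l <> nil | InfFam _ => True end) /\
  (forall i, fam_idx F i -> valid_interval (fam_get F i)) /\
  (forall i, fam_idx F (S i) ->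
     exists b, hi (fam_get F i) = Some b /\ (b < lo (fam_get F (S i)))%nat).

Definition fam_sq (x : rseq) (F : family) : Rbar :=
  match F with
  | FinFam l => Finite (sumsq x l)
  | InfFam f => Lim_seq (fun n => sum_n (fun i => (isum x (f i)) ^ 2) n)
  end.

Definition fam_norm (x : rseq) (F : family) : Rbar := Rbar_sqrt (fam_sq x F).

Definition norming (x : rseq) (F : family) : Prop :=
  is_family F /\ fam_norm x F = Jnorm x.

Definition supp (x : rseq) (n : nat) : Prop := x n <> 0.

Definition is_max_of (A : nat -> Prop) (m : nat) : Prop :=
  A m /\ forall n, A n -> (n <= m)%nat.

(* sup A = sup B for nonempty A, B ⊂ N (sup = max if finite/bounded, oo otherwise) *)
Definition same_sup (A B : nat -> Prop) : Prop :=
  forall m, is_max_of A m <-> is_max_of B m.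

Definition norming_partition (x : rseq) (F : family) : Prop :=
  norming x F /\
  (forall i, fam_idx F (S i) ->
     supp x (lo (fam_get F i)) /\
     exists b, hi (fam_get F i) = Some b /\ supp x b) /\
  (match F with
   | FinFam l => forall i, S i = length l ->
       supp x (lo (fam_get F i)) /\
       same_sup (in_interval (fam_get F i)) (supp x)
   | InfFam _ => True
   end).

Definition countable_set {T : Type} (A : T -> Prop) : Prop :=
  exists g : T -> nat, forall a b, A a -> A b -> g a = g b -> a = b.

(* For beta : nat -> bool, let x_beta be the concatenation of the blocks
   (2/9) 3^-j (2, -1, 2, -2, 1, -2), each padded to length 7 by a zero placed
   after it when beta j holds and before it otherwise.  The motif has sum 0,
   squared mass 18 and prefix sums in [0, 3]; hence the square of every interval
   sum of x_beta, tails included, is at most the l2-mass of x_beta on that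
   interval, and ||x_beta||_J = ||x_beta||_2 = 1.  As ||.||_2 <= ||.||_J and the
   Euclidean ball is strictly convex, x_beta is extreme in B_J.  Every motif can
   be cut as (2 - 1 + 2 | -2 | 1 | -2) or as (2 | -1 | 2 | -2 + 1 - 2), with
   squared sums 9 + 4 + 1 + 4 = 4 + 1 + 4 + 9 = 18, so independent choices in
   each block give 2^aleph_0 norming partitions of x_beta, while beta |-> x_beta
   is injective. *)

From Stdlib Require Import Reals Lra Lia List ClassicalEpsilon FunctionalExtensionality.
From Coquelicot Require Import Coquelicot.
Import ListNotations.
Open Scope R_scope.

Fixpoint psum (f : nat -> R) (n : nat) : R :=
  match n with O => 0 | S k => psum f k + f k end.

Definition sqsum (f : rseq) : nat -> R := psum (fun k => f k ^ 2).

Lemma psum_ext f g n : (forall k, (k < n)%nat -> f k = g k) -> psum f n = psum g n.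
Proof.
  induction n as [|n IH]; intros Hfg; simpl; [reflexivity|].
  rewrite IH by (intros; apply Hfg; lia). rewrite Hfg by lia. reflexivity.
Qed.

Lemma psum_le f g n : (forall k, (k < n)%nat -> f k <= g k) -> psum f n <= psum g n.
Proof.
  induction n as [|n IH]; intros Hfg; simpl; [lra|].
  assert (psum f n <= psum g n) by (apply IH; intros; apply Hfg; lia).
  assert (f n <= g n) by (apply Hfg; lia). lra.
Qed.

Lemma psum_scal c f n : psum (fun k => c * f k) n = c * psum f n.
Proof. induction n as [|n IH]; simpl; [ring|]. rewrite IH; ring. Qed.

Lemma psum_plus f g n : psum (fun k => f k + g k) n = psum f n + psum g n.
Proof. induction n as [|n IH]; simpl; [ring|]. rewrite IH; ring. Qed.

Lemma psum_add f a b : psum f (a + b) = psum f a + psum (fun i => f (a + i)%nat) b.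
Proof.
  induction b as [|b IH]; simpl; [rewrite Nat.add_0_r; ring|].
  rewrite Nat.add_succ_r; simpl. rewrite IH; ring.
Qed.

Lemma psum_blocks f k j :
  psum f (k * j) = psum (fun i => psum (fun r => f (k * i + r)%nat) k) j.
Proof.
  induction j as [|j IH]; simpl; [rewrite Nat.mul_0_r; reflexivity|].
  rewrite <- IH, Nat.mul_succ_r, psum_add; reflexivity.
Qed.

Lemma psum_nondecreasing f n m :
  (forall k, 0 <= f k) -> (n <= m)%nat -> psum f n <= psum f m.
Proof. intros Hf Hnm. induction Hnm; simpl; [lra|]. specialize (Hf m). lra. Qed.

Lemma psum_ge_term f k n : (forall k, 0 <= f k) -> (k < n)%nat -> f k <= psum f n.
Proof.
  intros Hf Hk. apply Rle_trans with (psum f (S k)).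
  - simpl. assert (0 <= psum f k) by (apply (psum_nondecreasing f 0); auto; lia). lra.
  - apply psum_nondecreasing; auto.
Qed.

Lemma sum_n_m_psum (f : nat -> R) a b : (a <= b)%nat -> sum_n_m f a b = psum f (S b) - psum f a.
Proof.
  intros Hab. induction Hab as [|b Hab IH].
  - rewrite sum_n_n. simpl. ring.
  - rewrite sum_n_Sm, IH by lia. simpl. change plus with Rplus. ring.
Qed.

Lemma sum_n_psum (f : nat -> R) n : sum_n f n = psum f (S n).
Proof.
  unfold sum_n. rewrite sum_n_m_psum by lia. simpl. ring.
Qed.

Lemma isum_finite (x : rseq) a b :
  (a <= b)%nat -> isum x (mkInterval a (Some b)) = psum x (S b) - psum x a.
Proof. intros Hab. apply sum_n_m_psum; exact Hab. Qed.

Lemma isum_infinite (x : rseq) a :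
  is_lim_seq (psum x) 0 -> isum x (mkInterval a None) = - psum x a.
Proof.
  intros Hx. unfold isum, Series; cbn [lo hi].
  rewrite (is_lim_seq_unique _ (- psum x a)); [reflexivity|].
  apply is_lim_seq_ext with (fun n => psum x (S n + a) - psum x a).
  { intros n. rewrite sum_n_psum, Nat.add_comm, psum_add. ring. }
  replace (- psum x a) with (0 - psum x a) by ring.
  apply is_lim_seq_minus'; [|apply is_lim_seq_const].
  apply (is_lim_seq_incr_1 (fun n => psum x (n + a))), is_lim_seq_incr_n, Hx.
Qed.

Definition indicator (I : interval) (k : nat) : R :=
  if excluded_middle_informative (in_interval I k) then 1 else 0.

Definition cover_count (l : list interval) (k : nat) : R :=
  fold_right Rplus 0 (map (fun I => indicator I k) l).

Lemma psum_window (f g : nat -> R) a m n :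
  (a <= m <= n)%nat ->
  (forall k, (a <= k < m)%nat -> g k = f k) ->
  (forall k, (k < a \/ m <= k < n)%nat -> g k = 0) ->
  psum g n = psum f m - psum f a.
Proof.
  intros Hamn Hin Hout.
  replace n with (m + (n - m))%nat by lia. replace m with (a + (m - a))%nat by lia.
  rewrite !psum_add.
  assert (Hlow : psum g a = 0).
  { rewrite (psum_ext g (fun k => 0 * 0)), psum_scal; [ring|].
    intros k Hk. rewrite Hout by lia. ring. }
  assert (Hmid : psum (fun i => g (a + i)%nat) (m - a) = psum (fun i => f (a + i)%nat) (m - a)).
  { apply psum_ext. intros k Hk. apply Hin. lia. }
  assert (Hhigh : psum (fun i => g (a + (m - a) + i)%nat) (n - (a + (m - a))) = 0).
  { rewrite (psum_ext _ (fun k => 0 * 0)), psum_scal; [ring|].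
    intros k Hk. rewrite Hout by lia. ring. }
  rewrite Hlow, Hmid, Hhigh. ring.
Qed.

Lemma psum_indicator (f : nat -> R) I a m n :
  (a <= m <= n)%nat -> (forall k, (k < n)%nat -> in_interval I k <-> (a <= k < m)%nat) ->
  psum (fun k => f k * indicator I k) n = psum f m - psum f a.
Proof.
  intros Hamn HI. apply psum_window; [exact Hamn| |]; intros k Hk; unfold indicator;
    destruct (excluded_middle_informative (in_interval I k)) as [H|H];
    rewrite HI in H by lia; lia || ring.
Qed.

Lemma pairwise_disjoint_cons I l : pairwise_disjoint (I :: l) ->
  pairwise_disjoint l /\ (forall J, In J l -> forall k, ~ (in_interval I k /\ in_interval J k)).
Proof.
  intros H. split.
  - intros i j Hi Hj Hij. apply (H (S i) (S j)); simpl; lia.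
  - intros J HJ. destruct (In_nth l J (mkInterval 0 None) HJ) as [n [Hn <-]].
    apply (H 0%nat (S n)); simpl; lia.
Qed.

Lemma indicator_cases I k : indicator I k = 0 \/ (indicator I k = 1 /\ in_interval I k).
Proof. unfold indicator. destruct (excluded_middle_informative _); auto. Qed.

Lemma cover_count_nonneg l k : 0 <= cover_count l k.
Proof.
  induction l as [|I l IH]; unfold cover_count; simpl; [lra|]. fold (cover_count l k).
  destruct (indicator_cases I k) as [->|[-> _]]; lra.
Qed.

Lemma cover_count_le1 l k : pairwise_disjoint l -> cover_count l k <= 1.
Proof.
  assert (Hcount0 : forall l, (forall J, In J l -> ~ in_interval J k) -> cover_count l k = 0).
  { induction l0 as [|J l0 IH]; intros HJ; [reflexivity|]. unfold cover_count; simpl.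
    fold (cover_count l0 k). rewrite IH by (intros; apply HJ; right; auto).
    destruct (indicator_cases J k) as [->|[_ HJk]]; [ring|]. exfalso; apply (HJ J); simpl; auto. }
  induction l as [|I l IH]; intros Hd; unfold cover_count; simpl; [lra|].
  fold (cover_count l k). destruct (pairwise_disjoint_cons I l Hd) as [Hl HI].
  destruct (indicator_cases I k) as [->|[-> HIk]].
  - specialize (IH Hl). lra.
  - rewrite Hcount0; [lra|]. intros J HJ HJk. exact (HI J HJ k (conj HIk HJk)).
Qed.

Lemma sum_psum_indicator (g : nat -> R) l M :
  fold_right Rplus 0 (map (fun I => psum (fun k => g k * indicator I k) M) l) =
  psum (fun k => g k * cover_count l k) M.
Proof.
  induction l as [|I l IH]; simpl.
  - rewrite (psum_ext _ (fun k => 0 * 0)), psum_scal; [ring|].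
    intros; unfold cover_count; simpl; ring.
  - rewrite IH, <- psum_plus. apply psum_ext. intros k _. unfold cover_count; simpl. ring.
Qed.

Lemma fold_Rplus_le (f g : interval -> R) l : (forall I, In I l -> f I <= g I) ->
  fold_right Rplus 0 (map f l) <= fold_right Rplus 0 (map g l).
Proof.
  induction l as [|I l IH]; simpl; intros H; [lra|].
  assert (f I <= g I) by auto.
  assert (fold_right Rplus 0 (map f l) <= fold_right Rplus 0 (map g l)) by auto. lra.
Qed.

Lemma intervals_bounded (l : list interval) : exists N, forall I, In I l ->
  (lo I <= N)%nat /\ match hi I with Some b => (b < N)%nat | None => True end.
Proof.
  induction l as [|I l [N HN]]; [exists 0%nat; simpl; tauto|].
  exists (Nat.max N (Nat.max (lo I) (match hi I with Some b => S b | None => 0 end))).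
  intros J [<-|HJ].
  - destruct (hi I); split; lia.
  - destruct (HN J HJ) as [Hlo Hhi]. split; [lia|]. destruct (hi J); lia.
Qed.

Definition singletons (n : nat) : list interval :=
  map (fun k => mkInterval k (Some k)) (seq 0 n).

Lemma singletons_valid n I : In I (singletons n) -> valid_interval I.
Proof.
  unfold singletons. intros HI. apply in_map_iff in HI. destruct HI as [k [<- _]].
  unfold valid_interval; simpl; lia.
Qed.

Lemma singletons_disjoint n : pairwise_disjoint (singletons n).
Proof.
  intros i j Hi Hj Hij k [H1 H2]. unfold singletons in *. rewrite length_map, length_seq in *.
  rewrite nth_indep with (d' := mkInterval 0 (Some 0%nat)) in H1, H2
    by (rewrite length_map, length_seq; lia).
  rewrite (map_nth (fun k => mkInterval k (Some k))), seq_nth in H1, H2 by lia.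
  unfold in_interval in *; simpl in *. lia.
Qed.

Lemma fold_Rplus_seq (g : nat -> R) n : fold_right Rplus 0 (map g (seq 0 n)) = psum g n.
Proof.
  induction n as [|n IH]; [reflexivity|].
  rewrite seq_S, map_app, fold_right_app. simpl. rewrite <- IH.
  generalize (map g (seq 0 n)). intros s. induction s as [|u s IHs]; simpl; [ring|].
  rewrite IHs; ring.
Qed.

Lemma sumsq_singletons x n : sumsq x (singletons n) = sqsum x n.
Proof.
  unfold sumsq, singletons, sqsum. rewrite map_map, fold_Rplus_seq.
  apply psum_ext. intros k _. unfold isum; simpl. rewrite sum_n_n. reflexivity.
Qed.

Lemma sqsum_le_Jnorm_sq x n : Rbar_le (sqsum x n) (Jnorm_sq x).
Proof.
  unfold Jnorm_sq. apply (proj1 (Lub_Rbar_correct _)). exists (singletons n).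
  split; [apply singletons_valid|]. split; [apply singletons_disjoint|].
  symmetry; apply sumsq_singletons.
Qed.

Section IntervalSumsDominated.

Variables (x : rseq) (L : R).
Hypothesis psum_to_0 : is_lim_seq (psum x) 0.
Hypothesis sqsum_to_L : is_lim_seq (sqsum x) L.
Hypothesis interval_sum_sq_le :
  forall a b, (a <= b)%nat -> (psum x b - psum x a) ^ 2 <= sqsum x b - sqsum x a.

Lemma sqsum_le_lim n : sqsum x n <= L.
Proof.
  apply is_lim_seq_incr_compare; [exact sqsum_to_L|].
  intros k. unfold sqsum; simpl. pose proof (pow2_ge_0 (x k)). lra.
Qed.

Lemma psum_sq_le_tail a : psum x a ^ 2 <= L - sqsum x a.
Proof.
  set (u := fun b => psum x (b + a) - psum x a).
  assert (Hu : is_lim_seq u (0 - psum x a)).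
  { apply is_lim_seq_minus'; [apply is_lim_seq_incr_n, psum_to_0|apply is_lim_seq_const]. }
  assert (Hbound : forall b, u b * u b <= L - sqsum x a).
  { intros b. pose proof (interval_sum_sq_le a (b + a) ltac:(lia)).
    pose proof (sqsum_le_lim (b + a)). unfold u. nra. }
  assert (Hle := is_lim_seq_le _ _ _ _ Hbound (is_lim_seq_mult' _ _ _ _ Hu Hu)
                               (is_lim_seq_const (L - sqsum x a))).
  simpl in Hle. nra.
Qed.

(* The tail mass [L - sqsum x N] is lumped at [N], where it bounds every
   interval reaching past [N]. *)
Definition truncated_mass (N k : nat) : R :=
  if (k <? N)%nat then x k ^ 2 else L - sqsum x N.

Lemma truncated_mass_nonneg N k : 0 <= truncated_mass N k.
Proof.
  unfold truncated_mass. destruct (k <? N)%nat; [apply pow2_ge_0|].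
  pose proof (sqsum_le_lim N). lra.
Qed.

Lemma psum_truncated_mass N m : (m <= N)%nat -> psum (truncated_mass N) m = sqsum x m.
Proof.
  intros Hm. apply psum_ext. intros k Hk. unfold truncated_mass.
  replace (k <? N)%nat with true by (symmetry; apply Nat.ltb_lt; lia). reflexivity.
Qed.

Lemma psum_truncated_mass_total N : psum (truncated_mass N) (S N) = L.
Proof.
  simpl. rewrite psum_truncated_mass by lia. unfold truncated_mass.
  rewrite Nat.ltb_irrefl. ring.
Qed.

Lemma isum_sq_le_truncated_mass N I :
  valid_interval I -> (lo I <= N)%nat ->
  match hi I with Some b => (b < N)%nat | None => True end ->
  isum x I ^ 2 <= psum (fun k => truncated_mass N k * indicator I k) (S N).
Proof.
  destruct I as [a [b|]]; unfold valid_interval; cbn [lo hi]; intros Hab Ha Hb.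
  - rewrite isum_finite, (psum_indicator _ _ a (S b)) by (unfold in_interval; simpl; lia).
    rewrite !psum_truncated_mass by lia. apply interval_sum_sq_le; lia.
  - rewrite isum_infinite, (psum_indicator _ _ a (S N))
      by (try exact psum_to_0; unfold in_interval; simpl; lia).
    rewrite psum_truncated_mass_total, psum_truncated_mass by lia.
    pose proof (psum_sq_le_tail a). nra.
Qed.

Lemma sumsq_le_lim l :
  (forall I, In I l -> valid_interval I) -> pairwise_disjoint l -> sumsq x l <= L.
Proof.
  intros Hvalid Hdisj. destruct (intervals_bounded l) as [N HN].
  apply Rle_trans with
    (fold_right Rplus 0
       (map (fun I => psum (fun k => truncated_mass N k * indicator I k) (S N)) l)).
  - apply fold_Rplus_le. intros I HI. destruct (HN I HI).
    apply isum_sq_le_truncated_mass; auto.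
  - rewrite sum_psum_indicator, <- (psum_truncated_mass_total N). apply psum_le. intros k _.
    pose proof (cover_count_le1 l k Hdisj). pose proof (truncated_mass_nonneg N k).
    pose proof (cover_count_nonneg l k).
    nra.
Qed.

Lemma Jnorm_sq_eq_lim : Jnorm_sq x = Finite L.
Proof.
  apply Rbar_le_antisym.
  - apply (proj2 (Lub_Rbar_correct _)). intros r [l [Hvalid [Hdisj ->]]].
    apply sumsq_le_lim; assumption.
  - pose proof (sqsum_le_Jnorm_sq x) as Hle. destruct (Jnorm_sq x) as [J| |]; simpl in *.
    + apply (is_lim_seq_le _ _ _ _ Hle sqsum_to_L (is_lim_seq_const J)).
    + exact I.
    + exact (Hle 0%nat).
Qed.

End IntervalSumsDominated.

Lemma BJ_sqsum_le1 y n : BJ y -> sqsum y n <= 1.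
Proof.
  unfold BJ, Jnorm. pose proof (sqsum_le_Jnorm_sq y n) as Hle.
  destruct (Jnorm_sq y) as [J| |]; simpl in *; try tauto.
  intros HJ. destruct (Rle_dec J 1) as [|HJ1]; [lra|].
  assert (1 < sqrt J) by (rewrite <- sqrt_1; apply sqrt_lt_1_alt; lra). lra.
Qed.

Lemma extreme_BJ_of_unit_l2 x :
  Jnorm_sq x = Finite 1 -> is_lim_seq (sqsum x) 1 -> extreme_BJ x.
Proof.
  intros HJ Hl2. split.
  - unfold BJ, Jnorm. rewrite HJ. simpl. rewrite sqrt_1. lra.
  - intros y z t Hy Hz Ht Hx. apply functional_extensionality. intros k.
    assert (Hgap : forall n, psum (fun i => t * (1 - t) * (y i - z i) ^ 2) n <= 1 - sqsum x n).
    { intros n.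
      assert (Hid : psum (fun i => t * (1 - t) * (y i - z i) ^ 2) n =
                    t * sqsum y n + (1 - t) * sqsum z n - sqsum x n).
      { unfold sqsum. induction n as [|n IH]; cbn [psum]; [ring|]. rewrite IH, Hx. ring. }
      rewrite Hid. pose proof (BJ_sqsum_le1 y n Hy). pose proof (BJ_sqsum_le1 z n Hz). nra. }
    assert (Hk : forall n, t * (1 - t) * (y k - z k) ^ 2 <= 1 - sqsum x (n + S k)).
    { intros n. eapply Rle_trans; [|apply Hgap].
      apply (psum_ge_term (fun i => t * (1 - t) * (y i - z i) ^ 2)); [|lia].
      intros i. apply Rmult_le_pos; [nra|apply pow2_ge_0]. }
    assert (Hle := is_lim_seq_le _ _ _ _ Hk (is_lim_seq_const _)
      (is_lim_seq_minus' _ _ _ _ (is_lim_seq_const 1) (proj1 (is_lim_seq_incr_n _ (S k) 1) Hl2))).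
    simpl in Hle. assert (0 < t * (1 - t)) by nra.
    assert (Hsq : (y k - z k) ^ 2 <= 0) by nra.
    nra.
Qed.

Lemma bool_seq_not_inject_nat (h : (nat -> bool) -> nat) :
  ~ (forall f g, h f = h g -> f = g).
Proof.
  intros Hinj.
  set (d := fun n => if excluded_middle_informative (exists g, h g = n /\ g n = true)
                     then false else true).
  destruct (excluded_middle_informative (exists g, h g = h d /\ g (h d) = true))
    as [[g [Hg Hgd]]|Hno].
  - assert (g = d) as -> by (apply Hinj; exact Hg).
    assert (Hyes : exists g, h g = h d /\ g (h d) = true) by (exists d; auto).
    revert Hgd. unfold d at 1.
    destruct (excluded_middle_informative _); [discriminate|contradiction].
  - apply Hno. exists d. split; [reflexivity|].
    unfold d. destruct (excluded_middle_informative _); [contradiction|reflexivity].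
Qed.

Lemma not_countable_of_bool_seq_injection {T : Type} (A : T -> Prop) (phi : (nat -> bool) -> T) :
  (forall f, A (phi f)) -> (forall f g, phi f = phi g -> f = g) -> ~ countable_set A.
Proof.
  intros HA Hphi [G HG]. apply (bool_seq_not_inject_nat (fun f => G (phi f))).
  intros f g E. apply Hphi, HG; auto.
Qed.

Lemma div_mod_block k j r : (r < k)%nat -> ((k * j + r) / k = j /\ (k * j + r) mod k = r)%nat.
Proof.
  intros Hr. split.
  - symmetry; apply (Nat.div_unique _ _ _ r); lia.
  - symmetry; apply (Nat.mod_unique _ _ j); lia.
Qed.

Lemma block_decomposition k n : (0 < k)%nat -> exists j r, (r < k)%nat /\ n = (k * j + r)%nat.
Proof.
  intros Hk. exists (n / k)%nat, (n mod k)%nat.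
  split; [apply Nat.mod_upper_bound; lia | apply Nat.div_mod_eq].
Qed.

Definition weight (j : nat) : R := 2 / 9 * (1 / 3) ^ j.

Lemma weight_pos j : 0 < weight j.
Proof. unfold weight. apply Rmult_lt_0_compat; [lra|apply pow_lt; lra]. Qed.

Lemma weight_S j : weight (S j) = weight j / 3.
Proof. unfold weight; simpl; field. Qed.

(* [weight] is normalised so that the block masses [weight j ^ 2 * 18] add up to 1. *)
Lemma psum_block_masses j : psum (fun i => weight i ^ 2 * 18) j = 1 - 81 / 4 * weight j ^ 2.
Proof.
  induction j as [|j IH]; cbn [psum].
  - unfold weight; simpl; field.
  - rewrite IH, weight_S. field.
Qed.

Lemma weight_div_to_0 k : (0 < k)%nat -> is_lim_seq (fun n => weight (n / k)) 0.
Proof.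
  intros Hk. apply (is_lim_seq_subseq weight 0 (fun n => n / k)%nat).
  - intros P [N HN]. exists (k * N)%nat. intros n Hn. apply HN.
    apply Nat.div_le_lower_bound; lia.
  - unfold weight. replace (Finite 0) with (Rbar_mult (2 / 9) 0) by (simpl; f_equal; ring).
    apply is_lim_seq_scal_l, is_lim_seq_geom. rewrite Rabs_pos_eq; lra.
Qed.

Section WeightedBlocks.

Variables (k : nat) (f : nat -> R) (h : nat -> nat -> R).
Hypothesis k_pos : (0 < k)%nat.
Hypothesis f_block : forall i r, (r < k)%nat -> f (k * i + r)%nat = weight i ^ 2 * h i r.
Hypothesis h_total : forall i, psum (h i) k = 18.
Hypothesis h_partial : forall i r, (r <= k)%nat -> 0 <= psum (h i) r <= 18.

Lemma psum_weighted_blocks j r : (r <= k)%nat ->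
  psum f (k * j + r) = 1 - 81 / 4 * weight j ^ 2 + weight j ^ 2 * psum (h j) r.
Proof.
  intros Hr. rewrite psum_add, psum_blocks.
  assert (Hfull :
    psum (fun i => psum (fun r => f (k * i + r)%nat) k) j = 1 - 81 / 4 * weight j ^ 2).
  { rewrite <- psum_block_masses. apply psum_ext. intros i _.
    rewrite <- (h_total i), <- psum_scal. apply psum_ext. intros; apply f_block; lia. }
  assert (Hpart : psum (fun i => f (k * j + i)%nat) r = weight j ^ 2 * psum (h j) r).
  { rewrite <- psum_scal. apply psum_ext. intros; apply f_block; lia. }
  rewrite Hfull, Hpart. ring.
Qed.

Lemma weighted_blocks_to_1 : is_lim_seq (psum f) 1.
Proof.
  apply is_lim_seq_le_le with
    (fun n => 1 - 81 / 4 * (weight (n / k) * weight (n / k))) (fun _ => 1).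
  - intros n. destruct (block_decomposition k n k_pos) as [j [r [Hr ->]]].
    rewrite (proj1 (div_mod_block k j r Hr)), psum_weighted_blocks by lia.
    destruct (h_partial j r) as [H0 H18]; [lia|].
    assert (0 <= weight j ^ 2) by apply pow2_ge_0. nra.
  - replace (Finite 1) with (Finite (1 - 81 / 4 * (0 * 0))) by (f_equal; ring).
    apply is_lim_seq_minus'; [apply is_lim_seq_const|].
    apply (is_lim_seq_scal_l _ _ (Finite _)), is_lim_seq_mult'; apply weight_div_to_0, k_pos.
  - apply is_lim_seq_const.
Qed.

End WeightedBlocks.

Definition shift (b : bool) : nat := if b then 0 else 1.

Definition motif (b : bool) (r : nat) : R :=
  if (r <? shift b)%nat then 0 else nth (r - shift b) [2; -1; 2; -2; 1; -2] 0.

Ltac motif_compute := unfold sqsum, motif; cbn [psum shift Nat.ltb Nat.leb Nat.sub Nat.add nth].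

Lemma motif_totals b : psum (motif b) 7 = 0 /\ sqsum (motif b) 7 = 18.
Proof. destruct b; motif_compute; split; lra. Qed.

Lemma motif_interval_sq_le b r r' : (r <= r' <= 7)%nat ->
  (psum (motif b) r' - psum (motif b) r) ^ 2 <= sqsum (motif b) r' - sqsum (motif b) r.
Proof.
  intros H. destruct b;
  do 8 (destruct r as [|r]; [do 8 (destruct r' as [|r']; [motif_compute; lra || lia|]); lia|]); lia.
Qed.

Lemma motif_prefix_bounds b r : (r <= 7)%nat ->
  0 <= psum (motif b) r <= 3 /\ psum (motif b) r ^ 2 <= sqsum (motif b) r /\
  psum (motif b) r ^ 2 <= 18 - sqsum (motif b) r.
Proof.
  intros H. destruct b; do 8 (destruct r as [|r]; [motif_compute; repeat split; lra|]); lia.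
Qed.

Definition xseq (beta : nat -> bool) (n : nat) : R :=
  weight (n / 7) * motif (beta (n / 7)%nat) (n mod 7).

Lemma xseq_block beta j r : (r < 7)%nat -> xseq beta (7 * j + r) = weight j * motif (beta j) r.
Proof. intros Hr. unfold xseq. destruct (div_mod_block 7 j r Hr) as [-> ->]. reflexivity. Qed.

Lemma psum_xseq beta j r : (r <= 7)%nat ->
  psum (xseq beta) (7 * j + r) = weight j * psum (motif (beta j)) r.
Proof.
  intros Hr. rewrite psum_add, psum_blocks.
  assert (Hblock : forall i r, (r <= 7)%nat ->
            psum (fun r => xseq beta (7 * i + r)%nat) r = weight i * psum (motif (beta i)) r).
  { intros i r' Hr'. rewrite <- psum_scal. apply psum_ext. intros; apply xseq_block; lia. }
  rewrite Hblock by exact Hr.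
  rewrite (psum_ext _ (fun _ => 0 * 0)), psum_scal; [ring|].
  intros i _. rewrite Hblock, (proj1 (motif_totals (beta i))) by lia. ring.
Qed.

Lemma sqsum_xseq beta j r : (r <= 7)%nat ->
  sqsum (xseq beta) (7 * j + r) =
  1 - 81 / 4 * weight j ^ 2 + weight j ^ 2 * sqsum (motif (beta j)) r.
Proof.
  intros Hr. apply (psum_weighted_blocks 7 _ (fun i r => motif (beta i) r ^ 2));
    [lia| |intros i; apply motif_totals|exact Hr].
  intros i r' Hr'. rewrite xseq_block by exact Hr'. ring.
Qed.

Lemma psum_xseq_to_0 beta : is_lim_seq (psum (xseq beta)) 0.
Proof.
  apply is_lim_seq_le_le with (fun _ => 0) (fun n => 3 * weight (n / 7)).
  - intros n. destruct (block_decomposition 7 n) as [j [r [Hr ->]]]; [lia|].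
    rewrite (proj1 (div_mod_block 7 j r Hr)), psum_xseq by lia.
    destruct (motif_prefix_bounds (beta j) r) as [[H0 H3] _]; [lia|].
    pose proof (weight_pos j). nra.
  - apply is_lim_seq_const.
  - replace (Finite 0) with (Rbar_mult 3 0) by (simpl; f_equal; ring).
    apply is_lim_seq_scal_l, weight_div_to_0; lia.
Qed.

Lemma sqsum_xseq_to_1 beta : is_lim_seq (sqsum (xseq beta)) 1.
Proof.
  apply (weighted_blocks_to_1 7 _ (fun i r => motif (beta i) r ^ 2)); [lia| | |].
  - intros i r Hr. rewrite xseq_block by exact Hr. ring.
  - intros i. apply motif_totals.
  - intros i r Hr. destruct (motif_prefix_bounds (beta i) r Hr) as [_ [H1 H2]].
    fold (sqsum (motif (beta i)) r). pose proof (pow2_ge_0 (psum (motif (beta i)) r)). lra.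
Qed.

(* Within a block this is a property of the motif; across blocks, prefix sums of
   the motif lie in [0, 3], so the cross term of the two partial blocks is <= 0. *)
Lemma xseq_interval_sq_le beta a b : (a <= b)%nat ->
  (psum (xseq beta) b - psum (xseq beta) a) ^ 2 <= sqsum (xseq beta) b - sqsum (xseq beta) a.
Proof.
  intros Hab.
  destruct (block_decomposition 7 a) as [j [r [Hr ->]]]; [lia|].
  destruct (block_decomposition 7 b) as [j' [r' [Hr' ->]]]; [lia|].
  rewrite !psum_xseq, !sqsum_xseq by lia.
  pose proof (weight_pos j). pose proof (weight_pos j').
  assert (j = j' \/ (j < j')%nat) as [<-|Hjj'] by nia.
  - pose proof (motif_interval_sq_le (beta j) r r' ltac:(nia)).
    assert (0 <= weight j ^ 2) by apply pow2_ge_0. nra.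
  - assert (Hmass : sqsum (xseq beta) (7 * j + 7) <= sqsum (xseq beta) (7 * j' + 0)).
    { apply psum_nondecreasing; [intros; apply pow2_ge_0|lia]. }
    rewrite !sqsum_xseq, (proj2 (motif_totals (beta j))) in Hmass by lia.
    unfold sqsum in Hmass; cbn [psum] in Hmass.
    destruct (motif_prefix_bounds (beta j) r) as [[Hs0 Hs3] [_ Hsq]]; [lia|].
    destruct (motif_prefix_bounds (beta j') r') as [[Hs0' Hs3'] [Hsq' _]]; [lia|].
    set (s := psum (motif (beta j)) r) in *. set (s' := psum (motif (beta j')) r') in *.
    set (q := sqsum (motif (beta j)) r) in *. set (q' := sqsum (motif (beta j')) r') in *.
    set (w := weight j) in *. set (w' := weight j') in *. clearbody s s' q q' w w'.
    assert (w' ^ 2 * s' ^ 2 <= w' ^ 2 * q') by (apply Rmult_le_compat_l; nra).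
    assert (w ^ 2 * s ^ 2 <= w ^ 2 * (18 - q)) by (apply Rmult_le_compat_l; nra).
    assert (0 <= w * w' * s * s') by (repeat apply Rmult_le_pos; lra).
    nra.
Qed.

Lemma Jnorm_sq_xseq beta : Jnorm_sq (xseq beta) = Finite 1.
Proof.
  apply Jnorm_sq_eq_lim; [apply psum_xseq_to_0|apply sqsum_xseq_to_1|apply xseq_interval_sq_le].
Qed.

Lemma xseq_extreme beta : extreme_BJ (xseq beta).
Proof. apply extreme_BJ_of_unit_l2; [apply Jnorm_sq_xseq|apply sqsum_xseq_to_1]. Qed.

Lemma xseq_injective beta beta' : xseq beta = xseq beta' -> beta = beta'.
Proof.
  intros E. apply functional_extensionality. intros j.
  assert (Hj := f_equal (fun x => x (7 * j + 0)%nat) E). cbv beta in Hj.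
  rewrite !xseq_block in Hj by lia. pose proof (weight_pos j).
  unfold motif in Hj. destruct (beta j), (beta' j); cbn in Hj; [reflexivity|nra|nra|reflexivity].
Qed.

(* (first, last) offsets, from the start of the motif, of its four pieces. *)
Definition cut (g : bool) (r : nat) : nat * nat :=
  nth r (if g then [(0, 2); (3, 3); (4, 4); (5, 5)] else [(0, 0); (1, 1); (2, 2); (3, 5)])%nat
    (0, 0)%nat.

Definition cut_sq (g : bool) (r : nat) : R := nth r (if g then [9; 4; 1; 4] else [4; 1; 4; 9]) 0.

Lemma cut_facts b g r : (r < 4)%nat ->
  let (l, h) := cut g r in
  (l <= h)%nat /\ (shift b + h < 7)%nat /\
  motif b (shift b + l) <> 0 /\ motif b (shift b + h) <> 0 /\
  (psum (motif b) (shift b + h + 1) - psum (motif b) (shift b + l)) ^ 2 = cut_sq g r.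
Proof.
  intros Hr. destruct b, g;
    do 4 (destruct r as [|r]; [unfold cut, cut_sq; motif_compute; repeat split; lia || lra|]); lia.
Qed.

Lemma cut_ordered g r : (r < 3)%nat -> (snd (cut g r) < fst (cut g (S r)))%nat.
Proof. intros Hr. destruct g; do 3 (destruct r as [|r]; [cbn; lia|]); lia. Qed.

Lemma cut_sq_partial g r : (r <= 4)%nat -> 0 <= psum (cut_sq g) r <= 18.
Proof. intros Hr. destruct g; do 5 (destruct r as [|r]; [cbn; lra|]); lia. Qed.

Lemma cut_sq_total g : psum (cut_sq g) 4 = 18.
Proof. destruct g; cbn; lra. Qed.

Definition cut_interval (beta gam : nat -> bool) (j r : nat) : interval :=
  mkInterval (7 * j + (shift (beta j) + fst (cut (gam j) r)))
             (Some (7 * j + (shift (beta j) + snd (cut (gam j) r)))%nat).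

Definition cutting (beta gam : nat -> bool) (i : nat) : interval :=
  cut_interval beta gam (i / 4) (i mod 4).

Lemma cutting_block beta gam j r :
  (r < 4)%nat -> cutting beta gam (4 * j + r) = cut_interval beta gam j r.
Proof. intros Hr. unfold cutting. destruct (div_mod_block 4 j r Hr) as [-> ->]. reflexivity. Qed.

Lemma isum_cut_interval_sq beta gam j r : (r < 4)%nat ->
  isum (xseq beta) (cut_interval beta gam j r) ^ 2 = weight j ^ 2 * cut_sq (gam j) r.
Proof.
  intros Hr. pose proof (cut_facts (beta j) (gam j) r Hr) as Hcut. unfold cut_interval.
  destruct (cut (gam j) r) as [l h]; cbn [fst snd].
  destruct Hcut as [Hlh [Hh7 [_ [_ Hsq]]]].
  rewrite isum_finite by lia.
  replace (S (7 * j + (shift (beta j) + h))) with (7 * j + (shift (beta j) + h + 1))%nat by lia.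
  rewrite !psum_xseq by lia. rewrite <- Hsq. ring.
Qed.

Lemma cutting_sq_to_1 beta gam :
  is_lim_seq (fun n => sum_n (fun i => isum (xseq beta) (cutting beta gam i) ^ 2) n) 1.
Proof.
  apply is_lim_seq_ext with
    (fun n => psum (fun i => isum (xseq beta) (cutting beta gam i) ^ 2) (S n)).
  { intros n. symmetry. apply sum_n_psum. }
  apply (is_lim_seq_incr_1 (psum _)).
  apply (weighted_blocks_to_1 4 _ (fun j => cut_sq (gam j))); [lia| | |].
  - intros j r Hr. rewrite cutting_block by exact Hr. apply isum_cut_interval_sq, Hr.
  - intros j. apply cut_sq_total.
  - intros j r Hr. apply cut_sq_partial, Hr.
Qed.

Lemma cutting_is_family beta gam : is_family (InfFam (cutting beta gam)).
Proof.
  split; [exact I|split]; cbn [fam_idx fam_get]; intros i _;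
    destruct (block_decomposition 4 i) as [j [r [Hr ->]]]; try lia;
    rewrite cutting_block by exact Hr;
    pose proof (cut_facts (beta j) (gam j) r Hr) as Hcut; unfold cut_interval; cbn [lo hi].
  - destruct (cut (gam j) r) as [l h]. unfold valid_interval; cbn [hi lo fst snd]. lia.
  - eexists; split; [reflexivity|].
    assert (Hr3 : (r < 3)%nat \/ r = 3%nat) by lia. destruct Hr3 as [Hr3 | ->].
    + replace (S (4 * j + r)) with (4 * j + S r)%nat by lia. rewrite cutting_block by lia.
      pose proof (cut_ordered (gam j) r Hr3). unfold cut_interval; cbn [lo]. lia.
    + replace (S (4 * j + 3)) with (4 * S j + 0)%nat by lia. rewrite cutting_block by lia.
      destruct (cut (gam j) 3) as [l h]. unfold cut_interval; cbn [lo snd]. lia.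
Qed.

Lemma cutting_ends_in_supp beta gam i :
  supp (xseq beta) (lo (cutting beta gam i)) /\
  exists b, hi (cutting beta gam i) = Some b /\ supp (xseq beta) b.
Proof.
  destruct (block_decomposition 4 i) as [j [r [Hr ->]]]; [lia|]. rewrite cutting_block by exact Hr.
  pose proof (cut_facts (beta j) (gam j) r Hr) as Hcut. pose proof (weight_pos j).
  unfold cut_interval, supp; cbn [lo hi]. destruct (cut (gam j) r) as [l h]; cbn [fst snd].
  destruct Hcut as [Hlh [Hh7 [Hl0 [Hh0 _]]]].
  split; [|eexists; split; [reflexivity|]];
    rewrite xseq_block by lia; apply Rmult_integral_contrapositive; split; lra.
Qed.

Lemma cutting_norming_partition beta gam :
  norming_partition (xseq beta) (InfFam (cutting beta gam)).
Proof.
  split; [split|split; [intros i _; apply cutting_ends_in_supp|exact I]].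
  - apply cutting_is_family.
  - unfold fam_norm, fam_sq, Jnorm.
    rewrite Jnorm_sq_xseq, (is_lim_seq_unique _ _ (cutting_sq_to_1 beta gam)). reflexivity.
Qed.

Lemma cutting_injective beta gam gam' : cutting beta gam = cutting beta gam' -> gam = gam'.
Proof.
  intros E. apply functional_extensionality. intros j.
  assert (Hj := f_equal (fun f => hi (f (4 * j + 0)%nat)) E). cbv beta in Hj.
  rewrite !cutting_block in Hj by lia. unfold cut_interval in Hj; cbn [hi] in Hj.
  injection Hj as Hj.
  destruct (gam j), (gam' j); cbn in Hj; [reflexivity|lia|lia|reflexivity].
Qed.

Theorem proposition6p7 :
  ~ countable_set (fun x : rseq =>
      extreme_BJ x /\ ~ countable_set (norming_partition x)).
Proof.
  apply (not_countable_of_bool_seq_injection _ xseq); [|exact xseq_injective].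
  intros beta. split; [apply xseq_extreme|].
  apply (not_countable_of_bool_seq_injection _ (fun gam => InfFam (cutting beta gam))).
  - apply cutting_norming_partition.
  - intros gam gam' E. injection E. apply cutting_injective.
Qed.
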